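(* Let $\Omega\subseteq\mathbb{R}^N$ be a domain, $\mathcal{D}\subseteq \Omega\times\mathbb{R}\times\mathbb{R}^N\times\mathbb{S}(N)$, and $F:\mathcal{D}\to\mathbb{R}$ degenerate elliptic. Class U is a proper subset of Class M. In particular, suppose $F$ belongs to Class U, with constant $\lambda>0$ and locally bounded function $H$. Fix $\omega\in\Omega\times\mathbb{R}\times\mathbb{R}^N$. Then the functions $$g_1(t,M)=\lambda t-\lambda\,\lambda_1(M)-H(\omega)-F(\omega,M)\quad\text{(for $M$ with $(\omega,M)\in\mathcal{D}$)},$$ $$g_2(t,M)=\lambda t+\lambda\,\lambda_1(M)+H(\omega)-F(\omega,-M)\quad\text{(for $M$ with $(\omega,-M)\in\mathcal{D}$)},$$ $t\in\mathbb{R}$, satisfy properties (1)–(4) in the definition of Class M for this $\omega$, thus verifying membership of $F$ in Class M.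
   Context: $\mathbb{S}(N)$ is the space of real symmetric $N\times N$ matrices with the Löwner order ($A\le B$ iff $\langle Ax,x\rangle\le\langle Bx,x\rangle$ for all $x$). For $X\in\mathbb{S}(N)$, $\lambda_1(X)\le\dots\le\lambda_N(X)$ are its eigenvalues in increasing order. $F:\mathcal{D}\to\mathbb{R}$ is degenerate elliptic if for every $\omega\in\mathbb{R}^N\times\mathbb{R}\times\mathbb{R}^N$ with $(\omega,X),(\omega,Y)\in\mathcal{D}$, $X\le Y$ implies $F(\omega,X)\ge F(\omega,Y)$. Class U: $F$ is continuous in its matrix entry, and there exist $\lambda>0$ and a locally bounded function $H$ such that for all $\omega\in\Omega\times\mathbb{R}\times\mathbb{R}^N$, whenever $(\omega,B),(\omega,M)\in\mathcal{D}$ and $B\le M$, we have $F(\omega,B)-F(\omega,M)\ge\lambda\operatorname{tr}(M-B)+H(\omega)$. Class M: $F$ is continuous in its matrix entry, and for every $\omega\in\Omega\times\mathbb{R}\times\mathbb{R}^N$ and sets $\mathcal{S}_1,\mathcal{S}_2\subseteq\mathbb{S}(N)$ with $\{\omega\}\times\mathcal{S}_i\subseteq\mathcal{D}$, there exist $g_i:\mathbb{R}\times\mathcal{S}_i\to\mathbb{R}$ (possibly depending on $\omega$) such that: (1) for each fixed $M_0\in\mathcal{S}_i$, $t\mapsto g_i(t,M_0)$ is an increasing bijection $\mathbb{R}\to\mathbb{R}$, with inverse denoted $s\mapsto g_i(-,M_0)^{-1}(s)$; (2) $M\mapsto g_i(-,M)^{-1}(0)$ is continuous on $\mathcal{S}_i$;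 (3) for $M\in\mathcal{S}_1$, if $(\omega,X)\in\mathcal{D}$ and $X\le M$ then $-F(\omega,X)\le g_1(\lambda_1(X),M)$; (4) for $M\in\mathcal{S}_2$, if $(\omega,Y)\in\mathcal{D}$ and $-Y\le M$ then $-F(\omega,Y)\ge g_2(\lambda_N(Y),M)$.
   Formalization: In Class M, and in the claim about g₁ and g₂, the set $\mathcal{S}_2$ satisfies $\{\omega\}\times(-\mathcal{S}_2)\subseteq\mathcal{D}$ in place of $\{\omega\}\times\mathcal{S}_2\subseteq\mathcal{D}$. The statement above fails without it. *)

From HB Require Import structures.
From mathcomp Require Import all_boot all_order all_algebra.
From mathcomp Require Import all_classical all_reals all_analysis.
Set Implicit Arguments. Unset Strict Implicit. Unset Printing Implicit Defensive.
Import Order.TTheory GRing.Theory Num.Theory.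
Import numFieldNormedType.Exports.
Local Open Scope classical_set_scope.
Local Open Scope ring_scope.

Section Defs.
Variables (R : realType) (N : nat).

Definition omega := ('rV[R]_N * R * 'rV[R]_N)%type.

Definition symmetric (A : 'M[R]_N) : Prop := A^T = A.

Definition loewner (A B : 'M[R]_N) : Prop :=
  forall x : 'cV[R]_N, (x^T *m A *m x) 0 0 <= (x^T *m B *m x) 0 0.

Definition lam_min (X : 'M[R]_N) : R := inf [set a : R | eigenvalue X a].
Definition lam_max (X : 'M[R]_N) : R := sup [set a : R | eigenvalue X a].

Definition is_domain (Om : set 'rV[R]_N) : Prop :=
  Om !=set0 /\ open Om /\ connected Om.

Definition in_Omega3 (Om : set 'rV[R]_N) (w : omega) : Prop := Om w.1.1.

Definition admissible_dom (Om : set 'rV[R]_N) (D : set (omega * 'M[R]_N)) :=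
  forall w X, D (w, X) -> in_Omega3 Om w /\ symmetric X.

Definition degenerate_elliptic (D : set (omega * 'M[R]_N))
  (F : omega -> 'M[R]_N -> R) : Prop :=
  forall w X Y, D (w, X) -> D (w, Y) -> loewner X Y -> F w Y <= F w X.

Definition mat_continuous (D : set (omega * 'M[R]_N))
  (F : omega -> 'M[R]_N -> R) : Prop :=
  forall w, {within [set X | D (w, X)], continuous (F w)}.

Definition locally_bounded (Om : set 'rV[R]_N) (H : omega -> R) : Prop :=
  forall w, in_Omega3 Om w -> exists C : R, \forall z \near w, `|H z| <= C.

Definition classU_ineq (Om : set 'rV[R]_N) (D : set (omega * 'M[R]_N))
  (F : omega -> 'M[R]_N -> R) (lam : R) (H : omega -> R) : Prop :=
  forall w B M, in_Omega3 Om w -> D (w, B) -> D (w, M) -> loewner B M ->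
    lam * \tr (M - B) + H w <= F w B - F w M.

Definition classU (Om : set 'rV[R]_N) (D : set (omega * 'M[R]_N))
  (F : omega -> 'M[R]_N -> R) : Prop :=
  mat_continuous D F /\
  exists (lam : R) (H : omega -> R),
    0 < lam /\ locally_bounded Om H /\ classU_ineq Om D F lam H.

(* g(-,M)^{-1}(0): the (unique, when g(-,M) is a bijection) zero of g(-,M) *)
Definition inv0 (g : R -> 'M[R]_N -> R) (M : 'M[R]_N) : R :=
  xget 0 [set t : R | g t M = 0].

Definition classM_props (D : set (omega * 'M[R]_N))
  (F : omega -> 'M[R]_N -> R) (w : omega) (S1 S2 : set 'M[R]_N)
  (g1 g2 : R -> 'M[R]_N -> R) : Prop :=
  (* (1) *)
  (forall M0, S1 M0 ->
     {homo (fun t => g1 t M0) : s t / s < t} /\ bijective (fun t => g1 t M0)) /\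
  (forall M0, S2 M0 ->
     {homo (fun t => g2 t M0) : s t / s < t} /\ bijective (fun t => g2 t M0)) /\
  (* (2) *)
  {within S1, continuous (inv0 g1)} /\
  {within S2, continuous (inv0 g2)} /\
  (* (3) *)
  (forall M X, S1 M -> D (w, X) -> loewner X M -> - F w X <= g1 (lam_min X) M) /\
  (* (4) *)
  (forall M Y, S2 M -> D (w, Y) -> loewner (- Y) M -> g2 (lam_max Y) M <= - F w Y).

Definition classM (Om : set 'rV[R]_N) (D : set (omega * 'M[R]_N))
  (F : omega -> 'M[R]_N -> R) : Prop :=
  mat_continuous D F /\
  forall w, in_Omega3 Om w ->
  forall S1 S2 : set 'M[R]_N,
    (forall M, S1 M -> D (w, M)) -> (forall M, S2 M -> D (w, - M)) ->
    exists g1 g2 : R -> 'M[R]_N -> R, classM_props D F w S1 S2 g1 g2.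

End Defs.

From Pilot Require Import Defs.
From HB Require Import structures.
From mathcomp Require Import all_boot all_order all_algebra.
From mathcomp Require Import all_classical all_reals all_analysis.
From mathcomp Require Import lra ring.
Import Order.TTheory GRing.Theory Num.Theory.
Import numFieldNormedType.Exports.
Local Open Scope classical_set_scope.
Local Open Scope ring_scope.
Set Implicit Arguments. Unset Strict Implicit. Unset Printing Implicit Defensive.

(* Let X <= M be symmetric and c a unit eigenvector of X for lambda_1(X).
   Since M - X >= 0, lambda_1(M) - lambda_1(X) <= <(M - X)c, c> <= tr(M - X),
   so the Class U inequality for (X, M) dominates property (3); property (4)
   is the same argument for -Y <= M, as lambda_N(Y) = -lambda_1(-Y).  Each g_i
   is affine in t with slope lambda, so its zero depends continuously on M as
   soon as lambda_1 does; and lambda_1, being the minimum of the Rayleigh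
   quotient over the compact unit sphere, is Lipschitz on symmetric matrices.
   For properness, F(X) = -sqrt(X_11) on the nonnegative multiples of the
   identity is in Class M with g_i(t) = sqrt t (and t for t < 0), while a
   Class U bound between 0 and u^2 I would give lambda u^2 + H <= u for all
   u >= 0. *)

Lemma quadratic_ge0_lincoef0 (R : realFieldType) (a b : R) :
  (forall t, 0 <= t * a + t ^+ 2 * b) -> a = 0.
Proof.
move=> q; have b0 : 0 <= b by have := q 1; have := q (-1); rewrite !expr2; lra.
(* at t = - a / (b + 1) the form equals - (a / (b + 1)) ^+ 2 *)
pose s := (b + 1)^-1; have s0 : 0 < s by rewrite invr_gt0; lra.
have sb : s * b = 1 - s by rewrite /s; field; lra.
have : 0 <= - (a * s) ^+ 2.
  have := q (- (a * s)).
  suff -> : - (a * s) * a + (- (a * s)) ^+ 2 * b = - (a * s) ^+ 2 by [].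
  transitivity (- (a * s) ^+ 2 + a ^+ 2 * s * (s * b - (1 - s))); first ring.
  by rewrite sb subrr mulr0 addr0.
rewrite oppr_ge0 => as0; have : a * s == 0 by rewrite -sqrf_eq0 eq_le as0 sqr_ge0.
by rewrite mulf_eq0 (gt_eqF s0) orbF => /eqP.
Qed.

Lemma lipschitz_within_continuous (K : realFieldType) (V W : normedModType K)
    (S : set V) (f : V -> W) (k : K) :
  (forall x y, S x -> S y -> `|f x - f y| <= k * `|x - y|) ->
  {within S, continuous f}.
Proof.
move=> lip; apply/subspace_continuousP => x Sx; apply/cvgrPdist_le => e e0.
have k_gt0 : 0 < `|k| + 1 by rewrite ltr_wpDl.
rewrite near_withinE; near=> y => Sy; apply: le_trans (lip _ _ Sx Sy) _.
apply: le_trans (ler_wpM2r (normr_ge0 _) (ler_wpDr ler01 (ler_norm k))) _.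
rewrite mulrC -ler_pdivlMr //; near: y.
by apply: cvgr_dist_le; [exact: cvg_id | rewrite divr_gt0].
Unshelve. all: by end_near.
Qed.

Lemma within_continuous_comp_homo (T U V : topologicalType) (A : set U) (B : set T)
    (f : T -> U) (g : U -> V) :
  continuous f -> {homo f : x / B x >-> A x} -> {within A, continuous g} ->
  {within B, continuous (g \o f)}.
Proof.
move=> cf fBA /subspace_continuousP cg; apply/subspace_continuousP => x Bx.
apply: cvg_comp (cg _ (fBA _ Bx)).
move=> P AP; rewrite /= nbhs_simpl.
have := cf x [set y | A y -> P y] AP; rewrite nbhs_simpl /within /=.
by apply: filterS => z APz Bz; exact: APz (fBA _ Bz).
Qed.

Section QuadraticForm.
Context {R : realFieldType} {n : nat}.
Implicit Types (A B P : 'M[R]_n) (u v x : 'rV[R]_n).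

Definition qform A v : R := (v *m A *m v^T) 0 0.
Definition sqnorm v : R := (v *m v^T) 0 0.

Lemma qformE A v : qform A v = \sum_i \sum_j v 0 i * A i j * v 0 j.
Proof.
rewrite /qform mxE [RHS]exchange_big; apply: eq_bigr => j _; rewrite !mxE big_distrl /=.
by apply: eq_bigr => i _; rewrite ?mxE.
Qed.

Lemma sqnormE v : sqnorm v = \sum_i v 0 i ^+ 2.
Proof. by rewrite /sqnorm mxE; apply: eq_bigr => i _; rewrite !mxE expr2. Qed.

Lemma sqnorm_ge0 v : 0 <= sqnorm v.
Proof. by rewrite sqnormE; apply: sumr_ge0 => i _; exact: sqr_ge0. Qed.

Lemma sqnorm_eq0 v : (sqnorm v == 0) = (v == 0).
Proof.
apply/idP/eqP => [|->]; last by rewrite sqnormE big1 // => i _; rewrite mxE expr0n.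
rewrite sqnormE psumr_eq0 => [/allP v0|i _]; last exact: sqr_ge0.
by apply/rowP => i; rewrite mxE; apply/eqP; rewrite -sqrf_eq0; exact: v0 (mem_index_enum _).
Qed.

Lemma sqnorm_gt0 v : (0 < sqnorm v) = (v != 0).
Proof. by rewrite lt_def sqnorm_ge0 sqnorm_eq0 andbT. Qed.

Lemma abs_coord_le1 v i : sqnorm v = 1 -> `|v 0 i| <= 1.
Proof.
rewrite sqnormE (bigD1 i) //= => v1.
have : v 0 i ^+ 2 <= 1 by rewrite -v1 lerDl; apply: sumr_ge0 => j _; exact: sqr_ge0.
by move=> vi; rewrite ler_norml; apply/andP; split; nra.
Qed.

Lemma qform_delta A (i : 'I_n) : qform A (delta_mx 0 i) = A i i.
Proof. by rewrite /qform -rowE trmx_delta -colE !mxE. Qed.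

Lemma sqnorm_delta (i : 'I_n) : sqnorm (delta_mx 0 i) = 1.
Proof. by rewrite /sqnorm trmx_delta -colE !mxE !eqxx. Qed.

Lemma qformD A B v : qform (A + B) v = qform A v + qform B v.
Proof. by rewrite /qform mulmxDr mulmxDl mxE. Qed.

Lemma qformN A v : qform (- A) v = - qform A v.
Proof. by rewrite /qform mulmxN mulNmx mxE. Qed.

Lemma qformB A B v : qform (A - B) v = qform A v - qform B v.
Proof. by rewrite qformD qformN. Qed.

Lemma qform_scalar (a : R) v : qform a%:M v = a * sqnorm v.
Proof. by rewrite /qform mul_mx_scalar -scalemxAl mxE. Qed.

Lemma qform_eigen A v (a : R) : v *m A = a *: v -> qform A v = a * sqnorm v.
Proof. by move=> vA; rewrite /qform vA -scalemxAl mxE. Qed.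

Lemma qformZ A (c : R) v : qform A (c *: v) = c ^+ 2 * qform A v.
Proof.
by rewrite /qform -scalemxAl linearZ /= -scalemxAr -scalemxAl !mxE mulrA expr2.
Qed.

Lemma sqnormZ (c : R) v : sqnorm (c *: v) = c ^+ 2 * sqnorm v.
Proof. by rewrite /sqnorm linearZ /= -scalemxAr -scalemxAl !mxE mulrA expr2. Qed.

Lemma qform_conj A B v : qform (B *m A *m B^T) v = qform A (v *m B).
Proof. by rewrite /qform trmx_mul !mulmxA. Qed.

Lemma qform_add_sym P u v (t : R) : P^T = P ->
  qform P (u + t *: v) = qform P u + 2 * t * (u *m P *m v^T) 0 0 + t ^+ 2 * qform P v.
Proof.
move=> sP; have vu : (v *m P *m u^T) 0 0 = (u *m P *m v^T) 0 0.
  transitivity ((v *m P *m u^T)^T 0 0); first by rewrite [RHS]mxE.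
  by rewrite !trmx_mul trmxK sP mulmxA.
rewrite /qform linearD linearZ /= !mulmxDl !mulmxDr -!scalemxAl -!scalemxAr.
move: vu; set a := u *m P *m u^T; set b := u *m P *m v^T.
set c := v *m P *m u^T; set d := v *m P *m v^T => vu.
by clearbody a b c d; rewrite scalerA !mxE vu; ring.
Qed.

Lemma psd_qform_eq0 P c : P^T = P -> (forall x, 0 <= qform P x) ->
  qform P c = 0 -> c *m P = 0.
Proof.
move=> sP psd Pc0; apply/eqP; rewrite -sqnorm_eq0; apply/eqP.
suff : 2 * sqnorm (c *m P) = 0 by move/eqP; rewrite mulf_eq0 pnatr_eq0 => /eqP.
apply: (@quadratic_ge0_lincoef0 _ _ (qform P (c *m P))) => t.
by have := psd (c + t *: (c *m P)); rewrite qform_add_sym // Pc0 add0r [2 * t]mulrC -mulrA.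
Qed.

Lemma mxtrace_psd_ge0 P : (forall x, 0 <= qform P x) -> 0 <= \tr P.
Proof. by move=> psd; apply: sumr_ge0 => i _; rewrite -qform_delta. Qed.

Lemma qform_le_mxtrace P v : sqnorm v = 1 -> (forall x, 0 <= qform P x) ->
  qform P v <= \tr P.
Proof.
(* Q projects onto the orthogonal of v, and 1 = v^T v + Q Q^T splits the trace. *)
move=> v1 psd; pose Q := 1%:M - v^T *m v.
have vv : v *m v^T = 1%:M.
  by apply/matrixP => i j; rewrite !ord1 -[LHS]/(sqnorm v) v1 mxE.
have QQ : Q *m Q^T = Q.
  have W2 : v^T *m v *m (v^T *m v) = v^T *m v.
    by rewrite mulmxA -(mulmxA v^T v v^T) vv mulmx1.
  rewrite /Q linearB /= tr_scalar_mx trmx_mul trmxK.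
  by rewrite mulmxBl !mulmxBr !mul1mx !mulmx1 W2 subrr subr0.
have -> : \tr P = qform P v + \tr (Q^T *m P *m Q^T^T).
  rewrite -[in LHS](mulmx1 P) -[1%:M](subrK (v^T *m v)) -/Q -{1}QQ.
  rewrite mulmxDr mxtraceD addrC; congr (_ + _).
    by rewrite mulmxA mxtrace_mulC mulmxA /qform /mxtrace big_ord1.
  by rewrite trmxK mulmxA mxtrace_mulC mulmxA.
rewrite lerDl; apply: mxtrace_psd_ge0 => x; rewrite qform_conj; exact: psd.
Qed.

End QuadraticForm.

Section Spectrum.
Context {R : realType} {n : nat}.
Implicit Types (A B E P X Y M : 'M[R]_n) (c v x : 'rV[R]_n).

Lemma loewner_qform A B : loewner A B <-> forall v, qform A v <= qform B v.
Proof.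
split=> [AB v|AB x]; first by have := AB v^T; rewrite trmxK.
by have := AB x^T; rewrite /qform trmxK.
Qed.

Lemma loewner_oppC A B : loewner (- A) B -> loewner (- B) A.
Proof.
by move/loewner_qform => AB; apply/loewner_qform => v; rewrite qformN lerNl -qformN.
Qed.

Lemma continuous_qform A : continuous (qform A).
Proof.
have -> : qform A = fun v => \sum_i \sum_j v 0 i * A i j * v 0 j.
  by apply/funext => v; exact: qformE.
apply: continuous_big => [|i _]; first exact: add_continuous.
apply: continuous_big => [|j _]; first exact: add_continuous.
move=> v; apply: (@continuousM _ _ (fun v : 'rV[R]_n => v 0 i * A i j) (fun v => v 0 j));
  last exact: coord_continuous.
apply: (@continuousM _ _ (fun v : 'rV[R]_n => v 0 i) (fun=> A i j)).
  exact: coord_continuous.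
exact: cst_continuous.
Qed.

Lemma compact_unit_sphere : compact [set v : 'rV[R]_n | sqnorm v = 1].
Proof.
have sphere_closed : closed [set v : 'rV[R]_n | sqnorm v = 1].
  have -> : @sqnorm R n = qform 1%:M by apply/funext => v; rewrite qform_scalar mul1r.
  apply: (continuous_closedP _).1 [set 1 : R] _; first exact: continuous_qform.
  exact: closed_eq.
have box_compact :
    compact [set v : 'rV[R]_n | forall i, `[(-1 : R), 1]%classic (v 0 i)].
  by apply: (@rV_compact _ _ (fun=> `[(-1 : R), 1]%classic)) => i; exact: segment_compact.
apply: subclosed_compact sphere_closed box_compact _ => v /= v1 i.
by rewrite in_itv /= -ler_norml; exact: abs_coord_le1.
Qed.

Lemma symmetricN A : Defs.symmetric (- A) -> A^T = A.
Proof. by rewrite /Defs.symmetric linearN => /oppr_inj. Qed.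

Lemma eigenvalueN A (a : R) : eigenvalue (- A) a = eigenvalue A (- a).
Proof.
apply/eigenvalueP/eigenvalueP => -[v vA v0]; exists v => //.
  by rewrite scaleNr -vA mulmxN opprK.
by rewrite mulmxN vA scaleNr opprK.
Qed.

Lemma lam_maxN A : lam_max A = - lam_min (- A).
Proof.
rewrite /lam_min /inf opprK /lam_max; congr sup; rewrite predeqE => a /=.
split=> [Ea|[b Eb <-]]; last by rewrite -eigenvalueN.
by exists (- a); rewrite ?eigenvalueN opprK.
Qed.

Lemma lam_min_eq A c (m : R) : c != 0 -> c *m A = m *: c ->
  (forall x, m * sqnorm x <= qform A x) -> lam_min A = m.
Proof.
move=> c0 cA low; have Em : [set a | eigenvalue A a] m by apply/eigenvalueP; exists c.
have lbm : lbound [set a | eigenvalue A a] m.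
  move=> a /eigenvalueP [v vA v0].
  by have := low v; rewrite (qform_eigen vA) ler_pM2r // sqnorm_gt0.
apply/le_anti/andP; split; first by apply: ge_inf => //; exists m.
by apply: lb_le_inf => //; exists m.
Qed.

Lemma norm_qform_le E v : sqnorm v = 1 -> `|qform E v| <= (n * n)%:R * `|E|.
Proof.
move=> v1; rewrite qformE; apply: le_trans (ler_norm_sum _ _ _) _.
have -> : (n * n)%:R * `|E| = \sum_(i < n) \sum_(j < n) `|E|.
  by rewrite !sumr_const !card_ord -mulrnA mulr_natl.
apply: ler_sum => i _; apply: le_trans (ler_norm_sum _ _ _) _.
apply: ler_sum => j _; rewrite !normrM.
have Eij : `|E i j| <= `|E|.
  rewrite [`|E|]mx_normrE.
  exact: (le_bigmax _ (fun ij : 'I_n * 'I_n => `|E ij.1 ij.2|) (i, j)).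
have vi := abs_coord_le1 i v1; have vj := abs_coord_le1 j v1.
rewrite -[X in _ <= X]mulr1; apply: ler_pM => //.
by rewrite -[X in _ <= X]mul1r; apply: ler_pM.
Qed.

Section PositiveDimension.
Hypothesis n_gt0 : (0 < n)%N.

Lemma unit_sphere_neq0 : [set v : 'rV[R]_n | sqnorm v = 1] !=set0.
Proof. by exists (delta_mx 0 (Ordinal n_gt0)); exact: sqnorm_delta. Qed.

Lemma exists_qform_min A :
  exists2 c, sqnorm c = 1 & forall x, qform A c * sqnorm x <= qform A x.
Proof.
have [c /[!inE] c1 cmin] := EVT_min_rV unit_sphere_neq0 compact_unit_sphere
  (continuous_subspaceT (@continuous_qform A)).
exists c => // x; have [->|x0] := eqVneq x 0.
  by rewrite /qform /sqnorm !(mul0mx, linear0, mulmx0) !mxE mulr0.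
pose s := Num.sqrt (sqnorm x).
have s_gt0 : 0 < s by rewrite sqrtr_gt0 sqnorm_gt0.
have s2 : s ^+ 2 = sqnorm x by rewrite sqr_sqrtr // sqnorm_ge0.
have := cmin (s^-1 *: x); rewrite !inE /= sqnormZ qformZ exprVn s2.
rewrite mulVf ?gt_eqF -?s2 ?exprn_gt0 // => /(_ erefl).
by rewrite ler_pdivlMl ?exprn_gt0 // mulrC.
Qed.

Lemma lam_min_minimizer A : A^T = A ->
  exists2 c, sqnorm c = 1 &
    qform A c = lam_min A /\ forall x, lam_min A * sqnorm x <= qform A x.
Proof.
move=> sA; have [c c1 cmin] := exists_qform_min A.
(* A - (qform A c)%:M is positive semidefinite and its form vanishes at c. *)
have cA : c *m A = qform A c *: c.
  apply/eqP; rewrite -subr_eq0 -mul_mx_scalar -mulmxBr; apply/eqP.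
  apply: psd_qform_eq0; first by rewrite linearB /= tr_scalar_mx sA.
    by move=> x; rewrite qformB qform_scalar subr_ge0.
  by rewrite qformB qform_scalar c1 mulr1 subrr.
have c0 : c != 0 by rewrite -sqnorm_gt0 c1 ltr01.
by exists c; rewrite ?(lam_min_eq c0 cA cmin).
Qed.

Lemma lam_min_attained A : A^T = A -> exists2 c, sqnorm c = 1 & qform A c = lam_min A.
Proof. by case/lam_min_minimizer => c c1 []; exists c. Qed.

Lemma lam_min_le_qform A x : A^T = A -> lam_min A * sqnorm x <= qform A x.
Proof. by case/lam_min_minimizer => c _ []. Qed.

Lemma lam_min_sub_le_mxtrace X M : X^T = X -> M^T = M -> loewner X M ->
  lam_min M - lam_min X <= \tr (M - X).
Proof.
move=> sX sM /loewner_qform XM; have [c c1 cX] := lam_min_attained sX.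
have psd x : 0 <= qform (M - X) x by rewrite qformB subr_ge0.
have := lam_min_le_qform c sM; rewrite c1 mulr1 => Mc.
by apply: le_trans (qform_le_mxtrace c1 psd); rewrite qformB cX lerD2r.
Qed.

Lemma lam_max_add_le_mxtrace Y M : Y^T = Y -> M^T = M -> loewner (- Y) M ->
  lam_max Y + lam_min M <= \tr (Y + M).
Proof.
move=> sY sM YM; have sNY : (- Y)^T = - Y by rewrite linearN /= sY.
have -> : Y + M = M - - Y by rewrite opprK addrC.
by rewrite lam_maxN addrC; exact: lam_min_sub_le_mxtrace.
Qed.

Lemma lam_min_lipschitz A B : A^T = A -> B^T = B ->
  `|lam_min A - lam_min B| <= (n * n)%:R * `|A - B|.
Proof.
suff side A' B' : A'^T = A' -> B'^T = B' ->
    lam_min A' - lam_min B' <= (n * n)%:R * `|A' - B'|.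
  by move=> sA sB; rewrite ler_norml side // andbT lerNl opprB distrC side.
move=> sA sB; have [c c1 cB] := lam_min_attained sB.
have := lam_min_le_qform c sA; rewrite c1 mulr1.
have -> : qform A' c = qform (A' - B') c + qform B' c by rewrite -qformD subrK.
rewrite cB -lerBlDr => h; apply: le_trans h _.
exact: le_trans (ler_norm _) (norm_qform_le _ c1).
Qed.

Lemma lam_min_within_continuous (S : set 'M[R]_n) :
  (forall M, S M -> M^T = M) -> {within S, continuous (@lam_min R n)}.
Proof.
move=> symS; apply: (@lipschitz_within_continuous _ _ _ _ _ (n * n)%:R).
by move=> A B /symS sA /symS sB; exact: lam_min_lipschitz.
Qed.

Lemma lam_min_scalar (t : R) : lam_min (t%:M : 'M[R]_n) = t.
Proof.
apply: (@lam_min_eq _ (delta_mx 0 (Ordinal n_gt0))).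
- by rewrite -sqnorm_gt0 sqnorm_delta ltr01.
- by rewrite mul_mx_scalar.
- by move=> x; rewrite qform_scalar.
Qed.

Lemma lam_max_scalar (t : R) : lam_max (t%:M : 'M[R]_n) = t.
Proof. by rewrite lam_maxN -(raddfN (@scalar_mx _ n)) lam_min_scalar opprK. Qed.

End PositiveDimension.

End Spectrum.

Lemma affine_homo_bij (K : numFieldType) (f : K -> K) (a b : K) :
  0 < a -> (forall t, f t = a * t + b) -> {homo f : s t / s < t} /\ bijective f.
Proof.
move=> a0 fE; split=> [s t st|]; first by rewrite !fE ltrD2r ltr_pM2l.
by exists (fun s => (s - b) / a) => t; rewrite ?fE; field; rewrite gt_eqF.
Qed.

Lemma inv0_affine (R : realType) n (g : R -> 'M[R]_n -> R) M (a b : R) :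
  0 < a -> (forall t, g t M = a * t + b) -> Defs.inv0 g M = - b / a.
Proof.
move=> a0 gE; apply: xget_unique => [|t] /=; rewrite gE.
  by field; rewrite gt_eqF.
by move/eqP; rewrite addr_eq0 => /eqP <-; field; rewrite gt_eqF.
Qed.

Lemma inv0_affine_continuous (R : realType) n (S : set 'M[R]_n)
    (g : R -> 'M[R]_n -> R) (a : R) (psi : 'M[R]_n -> R) :
  0 < a -> (forall t M, g t M = a * t + psi M) -> {within S, continuous psi} ->
  {within S, continuous (Defs.inv0 g)}.
Proof.
move=> a0 gE cpsi; apply: (@subspace_eq_continuous _ _ _ (fun M => - psi M / a)).
  by move=> M _; rewrite /from_subspace (inv0_affine a0 (gE ^~ M)).
by move=> M; apply: cvgMr_tmp; apply: cvgN; exact: cpsi.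
Qed.

Section ClassU.
Context {R : realType} {N : nat}.
Variables (Om : set 'rV[R]_N) (D : set (omega R N * 'M[R]_N)).
Variables (F : omega R N -> 'M[R]_N -> R) (lam : R) (H : omega R N -> R).
Hypotheses (N_gt0 : (0 < N)%N) (admD : admissible_dom Om D).
Hypotheses (lam_gt0 : 0 < lam) (FU : classU_ineq Om D F lam H).
Variable w : omega R N.
Hypothesis Om_w : in_Omega3 Om w.

Lemma classU_lam_min_bound M X : D (w, M) -> D (w, X) -> loewner X M ->
  - F w X <= lam * lam_min X - lam * lam_min M - H w - F w M.
Proof.
move=> DM DX XM; have [_ sM] := admD DM; have [_ sX] := admD DX.
have := ler_wpM2l (ltW lam_gt0) (lam_min_sub_le_mxtrace N_gt0 sX sM XM).
by have := FU Om_w DX DM XM; rewrite mulrBr; lra.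
Qed.

Lemma classU_lam_max_bound M Y : D (w, - M) -> D (w, Y) -> loewner (- Y) M ->
  lam * lam_max Y + lam * lam_min M + H w - F w (- M) <= - F w Y.
Proof.
move=> DM DY YM; have [_ /symmetricN sM] := admD DM; have [_ sY] := admD DY.
have := ler_wpM2l (ltW lam_gt0) (lam_max_add_le_mxtrace N_gt0 sY sM YM).
by have := FU Om_w DM DY (loewner_oppC YM); rewrite opprK mulrDr; lra.
Qed.

Lemma classU_classM_props S1 S2 : mat_continuous D F ->
  (forall M, S1 M -> D (w, M)) -> (forall M, S2 M -> D (w, - M)) ->
  classM_props D F w S1 S2
    (fun t M => lam * t - lam * lam_min M - H w - F w M)
    (fun t M => lam * t + lam * lam_min M + H w - F w (- M)).
Proof.
move=> contF DS1 DS2.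
have sym1 M : S1 M -> M^T = M by move/DS1/admD => [].
have sym2 M : S2 M -> M^T = M by move/DS2/admD => [_ /symmetricN].
have cmin1 := lam_min_within_continuous N_gt0 sym1.
have cmin2 := lam_min_within_continuous N_gt0 sym2.
have cF1 : {within S1, continuous (F w)}.
  by apply: continuous_subspaceW (contF w) => M /DS1.
have cF2 : {within S2, continuous (F w \o -%R)}.
  by apply: within_continuous_comp_homo (contF w) => //; exact: opp_continuous.
split; [|split; [|split; [|split; [|split]]]].
- by move=> M _; apply: affine_homo_bij lam_gt0 _ => t; rewrite -!addrA.
- by move=> M _; apply: affine_homo_bij lam_gt0 _ => t; rewrite -!addrA.
- apply: (inv0_affine_continuous lam_gt0 (psi := fun M => - (lam * lam_min M) - H w - F w M)).
    by move=> t M; rewrite !addrA.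
  move=> M; apply: cvgB; last exact: cF1.
  by apply: cvgB; [apply: cvgN; apply: cvgMl_tmp; exact: cmin1 | exact: cvg_cst].
- apply: (inv0_affine_continuous lam_gt0 (psi := fun M => lam * lam_min M + H w - F w (- M))).
    by move=> t M; rewrite !addrA.
  move=> M; apply: cvgB; last exact: cF2.
  by apply: cvgD; [apply: cvgMl_tmp; exact: cmin2 | exact: cvg_cst].
- by move=> M X /DS1; exact: classU_lam_min_bound.
- by move=> M Y /DS2; exact: classU_lam_max_bound.
Qed.

End ClassU.

Lemma quadratic_not_le_id (K : realFieldType) (a c : K) :
  0 < a -> ~ (forall u, 0 <= u -> a * u ^+ 2 + c <= u).
Proof.
move=> a0 q; pose u := (1 + `|c|) / a + 1.
have u_ge1 : 1 <= u by rewrite lerDr divr_ge0 // ?ltW // ltr_wpDr.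
have au : a * u = 1 + `|c| + a by rewrite /u mulrDr mulrC divfK ?gt_eqF // mulr1.
have := q u (le_trans ler01 u_ge1); rewrite expr2 mulrA au.
have := ler_norm (- c); rewrite normrN.
have u1_ge0 : 0 <= u - 1 by rewrite subr_ge0.
have := mulr_ge0 (addr_ge0 (normr_ge0 c) (ltW a0)) u1_ge0; lra.
Qed.

Section SqrtExt.
Context {R : rcfType}.

Definition sqrt_ext (t : R) : R := if 0 <= t then Num.sqrt t else t.

Lemma sqrt_ext_homo : {homo sqrt_ext : s t / s < t}.
Proof.
move=> s t st; rewrite /sqrt_ext.
case: (lerP 0 s) => s0; case: (lerP 0 t) => t0.
- by rewrite ltr_sqrt // (le_lt_trans s0 st).
- by have := lt_trans st t0; rewrite ltNge s0.
- by apply: lt_le_trans s0 _; rewrite sqrtr_ge0.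
- exact: st.
Qed.

Lemma sqrt_ext_bij : bijective sqrt_ext.
Proof.
apply: (@Bijective _ _ _ (fun z : R => if 0 <= z then z ^+ 2 else z)) => z; rewrite /sqrt_ext.
  by case: (lerP 0 z) => z0; [rewrite sqrtr_ge0 sqr_sqrtr | rewrite leNgt z0].
by case: (lerP 0 z) => z0; [rewrite sqr_ge0 sqrtr_sqr ger0_norm | rewrite leNgt z0].
Qed.

Lemma sqrt_ext_eq0 t : (sqrt_ext t == 0) = (t == 0).
Proof.
rewrite /sqrt_ext; case: (lerP 0 t) => [t0|/lt_eqF -> //].
by rewrite sqrtr_eq0 eq_le t0 andbT.
Qed.

End SqrtExt.

Section Counterexample.
Context {R : realType} {N : nat}.
Variable Om : set 'rV[R]_N.
Hypothesis N_gt0 : (0 < N)%N.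

Definition scalar_dom : set (omega R N * 'M[R]_N) :=
  [set p | Om p.1.1.1 /\ exists2 t : R, 0 <= t & p.2 = t%:M].

Definition sqrt_op (w : omega R N) (X : 'M[R]_N) : R :=
  - Num.sqrt (X (Ordinal N_gt0) (Ordinal N_gt0)).

Lemma sqrt_op_scalar w (t : R) : sqrt_op w t%:M = - Num.sqrt t.
Proof. by rewrite /sqrt_op mxE eqxx mulr1n. Qed.

Lemma scalar_dom_admissible : admissible_dom Om scalar_dom.
Proof. by move=> w X [Ow [t _ /= ->]]; split; last exact: tr_scalar_mx. Qed.

Lemma sqrt_op_elliptic : degenerate_elliptic scalar_dom sqrt_op.
Proof.
move=> w X Y [_ [s s0 /= ->]] [_ [t t0 /= ->]] /loewner_qform st.
rewrite !sqrt_op_scalar lerN2 ler_wsqrtr //.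
by have := st (delta_mx 0 (Ordinal N_gt0)); rewrite !qform_scalar sqnorm_delta !mulr1.
Qed.

Lemma sqrt_op_continuous : mat_continuous scalar_dom sqrt_op.
Proof.
move=> w; apply: continuous_subspaceT => X; pose i0 := Ordinal N_gt0.
have sqrt_entry : {for X, continuous (fun Y : 'M[R]_N => Num.sqrt (Y i0 i0))}.
  apply: (@continuous_comp _ _ _ (fun Y : 'M[R]_N => Y i0 i0) (@Num.sqrt R)).
    exact: coord_continuous.
  exact: sqrt_continuous.
exact: cvgN sqrt_entry.
Qed.

Lemma inv0_sqrt_ext : Defs.inv0 (fun t (_ : 'M[R]_N) => sqrt_ext t) = fun=> 0.
Proof.
apply/funext => M; apply: xget_unique => [|t] /=; first by apply/eqP; rewrite sqrt_ext_eq0.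
by move/eqP; rewrite sqrt_ext_eq0 => /eqP.
Qed.

Lemma sqrt_op_classM : classM Om scalar_dom sqrt_op.
Proof.
split=> [|w _ S1 S2 _ _]; first exact: sqrt_op_continuous.
have cinv0 S : {within S, continuous (Defs.inv0 (fun t (_ : 'M[R]_N) => sqrt_ext t))}.
  by rewrite inv0_sqrt_ext; apply: continuous_subspaceT; exact: cst_continuous.
exists (fun t _ => sqrt_ext t), (fun t _ => sqrt_ext t).
split; [|split; [|split; [|split; [|split]]]].
- by move=> M _; split; [exact: sqrt_ext_homo | exact: sqrt_ext_bij].
- by move=> M _; split; [exact: sqrt_ext_homo | exact: sqrt_ext_bij].
- exact: cinv0.
- exact: cinv0.
- move=> M X _ [_ [s s0 /= ->]] _.
  by rewrite sqrt_op_scalar opprK lam_min_scalar // /sqrt_ext s0.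
- move=> M Y _ [_ [s s0 /= ->]] _.
  by rewrite sqrt_op_scalar opprK lam_max_scalar // /sqrt_ext s0.
Qed.

Lemma sqrt_op_not_classU x0 : Om x0 -> ~ classU Om scalar_dom sqrt_op.
Proof.
move=> Om_x0 [_ [lam [H [lam_gt0 [_ FU]]]]].
pose w : omega R N := (x0, 0, 0).
apply: (quadratic_not_le_id (c := H w) lam_gt0) => u u0.
have D0 : scalar_dom (w, 0%:M) by split => //; exists 0.
have Du : scalar_dom (w, (u ^+ 2)%:M) by split => //; exists (u ^+ 2); rewrite ?sqr_ge0.
have le0u : loewner (0%:M : 'M[R]_N) (u ^+ 2)%:M.
  by apply/loewner_qform => v; rewrite !qform_scalar mul0r mulr_ge0 ?sqr_ge0 ?sqnorm_ge0.
have := FU w _ _ Om_x0 D0 Du le0u.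
rewrite !sqrt_op_scalar sqrtr0 oppr0 sub0r opprK sqrtr_sqr ger0_norm //.
rewrite -raddfB /= subr0 mxtrace_scalar => /(le_trans _); apply.
rewrite lerD2r ler_pM2l // -mulr_natr ler_peMr ?sqr_ge0 //.
by rewrite (ler_nat _ 1 N).
Qed.

End Counterexample.

Theorem lemma1 :
  (* Class U is contained in Class M, via the explicit g1, g2 *)
  (forall (R : realType) (N : nat) (Om : set 'rV[R]_N)
     (D : set (omega R N * 'M[R]_N)) (F : omega R N -> 'M[R]_N -> R)
     (lam : R) (H : omega R N -> R),
     (0 < N)%N -> is_domain Om -> admissible_dom Om D ->
     degenerate_elliptic D F -> mat_continuous D F ->
     0 < lam -> locally_bounded Om H -> classU_ineq Om D F lam H ->
     (forall w, in_Omega3 Om w ->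
      forall S1 S2 : set 'M[R]_N,
        (forall M, S1 M -> D (w, M)) -> (forall M, S2 M -> D (w, - M)) ->
        classM_props D F w S1 S2
          (fun t M => lam * t - lam * lam_min M - H w - F w M)
          (fun t M => lam * t + lam * lam_min M + H w - F w (- M))) /\
     classM Om D F) /\
  (* the inclusion is proper *)
  (forall (R : realType) (N : nat) (Om : set 'rV[R]_N),
     (0 < N)%N -> is_domain Om ->
     exists (D : set (omega R N * 'M[R]_N)) (F : omega R N -> 'M[R]_N -> R),
       admissible_dom Om D /\ degenerate_elliptic D F /\
       classM Om D F /\ ~ classU Om D F).
Proof.
split.
  move=> R N Om D F lam H N_gt0 _ admD _ contF lam_gt0 _ FU.
  have props := classU_classM_props N_gt0 admD lam_gt0 FU.
  split=> [w Om_w S1 S2|]; first exact: props.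
  by split=> // w Om_w S1 S2 DS1 DS2; do 2 eexists; apply: props.
move=> R N Om N_gt0 [[x0 Om_x0] _]; exists (scalar_dom Om), (sqrt_op N_gt0).
split; first exact: scalar_dom_admissible.
split; first exact: sqrt_op_elliptic.
split; first exact: sqrt_op_classM.
exact: sqrt_op_not_classU Om_x0.
Qed.
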